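(* Let $G$ be a finite, simple, connected graph and let $k\ge 0$. If $G$ contains a $k$-supported cycle, then $\sigma(G)\ge k$.
   Context: For a spanning tree $T$ of $G$, $\mathrm{Stretch}(G:T)=\max_{uv\in E(G)} d_T(u,v)$, and the stretch of $G$ is $\sigma(G)=\min_T \mathrm{Stretch}(G:T)$, the minimum over all spanning trees $T$ of $G$; $d_G,d_T$ denote graph distances. A cycle $C$ in $G$ is called $k$-supported (for a real number $k$) if $C$ can be partitioned into three edge-disjoint paths $I_1,I_2,I_3$, with $I_1\cap I_2$, $I_2\cap I_3$ and $I_3\cap I_1$ each consisting of exactly one vertex, such that for every triple of vertices $(u_1,u_2,u_3)$ with $u_i\in V(I_i)$ for $i=1,2,3$ we have $\max_{i,j\in\{1,2,3\}} d_G(u_i,u_j)\ge k$. *)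

From HB Require Import structures.
From mathcomp Require Import all_boot all_order all_algebra.
From mathcomp Require Import boolp.
Set Implicit Arguments. Unset Strict Implicit. Unset Printing Implicit Defensive.
Import Order.TTheory GRing.Theory Num.Theory.

Section Graphs.
Variable T : finType.

Definition simple_graph (e : rel T) := symmetric e /\ irreflexive e.
Definition connected_graph (e : rel T) := forall x y : T, connect e x y.

Definition walkn (r : rel T) (x y : T) (n : nat) : bool :=
  [exists p : n.-tuple T, path r x p && (last x p == y)].

(* graph distance: least n with a walk of length n from x to y
   (shortest walks have < #|T| edges; the value #|T| only occurs if y is
   unreachable from x, which never happens in a connected graph). *)
Definition dist (r : rel T) (x y : T) : nat :=
  find (walkn r x y) (iota 0 #|T|).

(* subgraphs on the full vertex set are given by a set of ordered pairs *)
Definition srel (S : {set T * T}) : rel T := fun x y => (x, y) \in S.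

Definition is_cycle (r : rel T) (c : seq T) : bool :=
  [&& uniq c, 2 < size c & cycle r c].

Definition acyclic (r : rel T) : Prop := forall c : seq T, ~~ is_cycle r c.

Definition spanning_tree (e : rel T) (S : {set T * T}) : Prop :=
  [/\ (forall x y, (x, y) \in S -> e x y),
      (forall x y, (x, y) \in S -> (y, x) \in S),
      (forall x y, connect (srel S) x y) &
      acyclic (srel S)].

Definition stretch (e : rel T) (S : {set T * T}) : nat :=
  \max_(p : T * T | e p.1 p.2) dist (srel S) p.1 p.2.

Definition sigma (e : rel T) : nat :=
  \big[minn/#|T|]_(S : {set T * T} | `[< spanning_tree e S >]) stretch e S.

Definition is_path (r : rel T) (s : seq T) : bool :=
  if s is x :: s' then path r x s' && uniq s else false.

Definition path_edges (s : seq T) : seq {set T} :=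
  [seq [set p.1; p.2] | p <- zip s (behead s)].
Definition cycle_edges (c : seq T) : seq {set T} :=
  if c is x :: _ then path_edges (rcons c x) else [::].

(* C is k-supported: its edge set is partitioned into three edge-disjoint
   paths I1, I2, I3 of G, pairwise meeting in exactly one vertex, and every
   transversal (u1,u2,u3) has max pairwise G-distance >= k. *)
Definition k_supported (R : numDomainType) (e : rel T) (k : R) (c : seq T) : Prop :=
  exists I1 I2 I3 : seq T,
    [/\ [&& is_path e I1, is_path e I2 & is_path e I3],
        perm_eq (path_edges I1 ++ path_edges I2 ++ path_edges I3) (cycle_edges c),
        [/\ #|[predI I1 & I2]| = 1%N, #|[predI I2 & I3]| = 1%N & #|[predI I3 & I1]| = 1%N] &
        forall u1 u2 u3 : T, u1 \in I1 -> u2 \in I2 -> u3 \in I3 ->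
          (k <= (maxn (dist e u1 u2) (maxn (dist e u2 u3) (dist e u1 u3)))%:R)%R].

End Graphs.

From HB Require Import structures.
From mathcomp Require Import all_boot all_order all_algebra.
From mathcomp Require Import boolp.
From mathcomp Require Import zify.
Import Order.TTheory GRing.Theory Num.Theory.

Set Implicit Arguments.
Unset Strict Implicit.
Unset Printing Implicit Defensive.

(* Fix a spanning tree S of stretch t.  Every edge uv of G is joined by a
   tree walk of length <= t, so each G-path I_i is followed by a tree walk
   P_i through all its vertices, and every vertex of P_i lies within t/2
   (in the tree) of some vertex of I_i.  The three walks pairwise meet,
   because the paths I_i do; by the Helly property of subtrees of a tree
   (proved via the median of three walks) they share a vertex m.  Choosing
   u_i in I_i within t/2 of m gives a transversal whose pairwise
   G-distances are at most t, hence k <= t. *)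

Section Walks.
Variable T : finType.
Implicit Types (r : rel T) (u v x : T) (s : seq T).

Lemma rev_walk r x s : symmetric r -> path r x s ->
  exists s', [/\ size s' = size s, path r (last x s) s' & last (last x s) s' = x].
Proof.
move=> sym ps; exists (rev (belast x s)); split.
- by rewrite size_rev size_belast.
- by rewrite rev_path; apply: etrans ps; apply: eq_path => a b; exact: sym.
- have := congr1 (last x) (congr1 rev (lastI x s)).
  by rewrite rev_rcons /= rev_cons last_rcons.
Qed.

Lemma dist_le_card r u v : dist r u v <= #|T|.
Proof. by apply: leq_trans (find_size _ _) _; rewrite size_iota. Qed.

Lemma dist_le_walk r u s : path r u s -> dist r u (last u s) <= size s.
Proof.
move=> ps; case: (leqP #|T| (size s)) => [|hs]; first exact: leq_trans (dist_le_card _ _ _).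
rewrite leqNgt; apply/negP => /(before_find 0); rewrite nth_iota // add0n.
suff -> : walkn r u (last u s) (size s) by [].
by apply/existsP; exists (in_tuple s); rewrite /= ps eqxx.
Qed.

Lemma dist_walk r u v : dist r u v < #|T| ->
  exists s, [/\ size s = dist r u v, path r u s & last u s = v].
Proof.
move=> h; have hs : has (walkn r u v) (iota 0 #|T|) by rewrite has_find size_iota.
have := nth_find 0 hs; rewrite -/(dist r u v) nth_iota // add0n.
by case/existsP=> p /andP[pp /eqP lp]; exists p; rewrite size_tuple.
Qed.

Definition within r (n : nat) u v : Prop :=
  exists s, [/\ size s <= n, path r u s & last u s = v].

Lemma within_dist (e r : rel T) a b u v m :
  symmetric r -> subrel r e -> within r a u m -> within r b v m ->
  dist e u v <= a + b.
Proof.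
move=> sym sub [su [hu pu lu]] [sv [hv pv lv]].
have [s' [hs' ps' ls']] := rev_walk sym pv; rewrite lv in ps' ls'.
have pe : path e u (su ++ s') by apply: (sub_path sub); rewrite cat_path pu lu.
have := dist_le_walk pe; rewrite last_cat lu ls' size_cat hs' => /leq_trans; apply.
exact: leq_add.
Qed.

End Walks.

Section Trees.
Variable T : finType.
Variable r : rel T.
Hypotheses (sym : symmetric r) (irr : irreflexive r) (acy : acyclic r).
Implicit Types (a b c u v x z : T) (p q s w : seq T).

(* The relation r restricted to the vertices of A; deleting a vertex z is
   restricting to predC1 z. *)
Definition restrict (A : {pred T}) : rel T := fun a b => [&& r a b, a \in A & b \in A].

Lemma restrict_sym A : connect_sym (restrict A).
Proof.
apply: sym_connect_sym => a b; rewrite /restrict sym.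
by case: (r b a); rewrite //= andbC.
Qed.

Lemma path_restrict A x s : path r x s -> {subset x :: s <= A} -> path (restrict A) x s.
Proof.
elim: s x => //= y s IH x /andP[rxy ps] sub.
rewrite /restrict rxy !sub ?inE ?eqxx ?orbT //=.
by apply: IH => // b hb; apply: sub; rewrite inE hb orbT.
Qed.

Lemma path_restrict_sub {A x s} : path (restrict A) x s -> {subset s <= A}.
Proof.
elim: s x => //= y s IH x /andP[/and3P[_ _ yA] ps] b.
by rewrite inE => /predU1P[->|]; [exact: yA | exact: IH ps b].
Qed.

Lemma notin_sub_predC1 z s : z \notin s -> {subset s <= predC1 z}.
Proof. by move=> zs v vs; rewrite inE; apply: contraNneq zs => <-. Qed.

(* In a forest, deleting a vertex disconnects any two of its neighbours:
   a connecting walk would close a cycle through the deleted vertex. *)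
Lemma neighbours_separated {z a b} : r z a -> r z b -> a != b ->
  ~~ connect (restrict (predC1 z)) a b.
Proof.
move=> rza rzb ab; apply/negP => /connectP[p pp Eb]; subst b.
case: (shortenP pp) ab rzb => p' pp' up' _ ab rzb {pp}.
have az : a != z by apply/eqP=> E; move: rza; rewrite E irr.
have zp' : z \notin p' by apply/negP => /(path_restrict_sub pp'); rewrite inE eqxx.
apply: (negP (acy (z :: a :: p'))); rewrite /is_cycle /=; apply/and3P; split.
- by rewrite inE negb_or eq_sym az zp'; exact: up'.
- by case: p' pp' up' zp' ab rzb => //=; rewrite eqxx.
- rewrite rza rcons_path sym rzb andbT.
  by apply: sub_path pp' => u v /and3P[].
Qed.

(* Strip common
   first steps; two distinct first steps would be connected avoiding a. *)
Lemma tree_median_uniq {a p q w} : uniq (a :: p) -> uniq (a :: q) ->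
  path r a p -> path r a q -> path r (last a p) w -> last (last a p) w = last a q ->
  exists m, [/\ m \in a :: p, m \in last a p :: w & m \in a :: q].
Proof.
elim: p a q => [|b p IH] a q up uq pp pq pw hl.
  by exists a; rewrite !mem_head.
have [Ha|aNw] := boolP (a \in last a (b :: p) :: w).
  by exists a; rewrite !mem_head Ha.
case: q uq pq hl => [|c q] uq pq hl.
  by move: aNw; rewrite -[a in a \notin _]hl mem_last.
move: pp pq up uq => /= /andP[rab pp] /andP[rac pq] /andP[aNp up] /andP[aNq uq].
have [Ebc|bc] := eqVneq b c.
  subst c; have [m [mp mw mq]] := IH b q up uq pp pq pw hl.
  by exists m; split; rewrite // inE ?mp ?mq orbT.
case/negP: (neighbours_separated rab rac bc).
have walk_avoid x s : path r x s -> a \notin x :: s -> connect (restrict (predC1 a)) x (last x s).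
  move=> ps /notin_sub_predC1 sub.
  by apply/connectP; exists s => //; exact: path_restrict.
have cw := walk_avoid _ _ pw aNw; rewrite /= hl in cw.
rewrite (connect_trans (walk_avoid _ _ pp aNp)) // (connect_trans cw) //.
by rewrite restrict_sym walk_avoid.
Qed.

Lemma tree_median {a p q w} :
  path r a p -> path r a q -> path r (last a p) w -> last (last a p) w = last a q ->
  exists m, [/\ m \in a :: p, m \in last a p :: w & m \in a :: q].
Proof.
have cons_sub s1 s2 : {subset s1 <= s2} -> {subset a :: s1 <= a :: s2}.
  by move=> sub v; rewrite !inE => /predU1P[->|/sub->]; rewrite ?eqxx ?orbT.
move=> pp pq; case: (shortenP pp) => p' pp' up' sp'.
case: (shortenP pq) => q' pq' uq' sq' pw hl.
have [m [mp mw mq]] := tree_median_uniq up' uq' pp' pq' pw hl.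
by exists m; split; [exact: cons_sub sp' m mp | | exact: cons_sub sq' m mq].
Qed.

Lemma walk_within {x p u v} : path r x p -> u \in x :: p -> v \in x :: p ->
  exists s, [/\ path r u s, last u s = v & {subset u :: s <= x :: p}].
Proof.
move=> pp hu hv; pose A := mem (x :: p).
have pA : path (restrict A) x p by exact: path_restrict.
have cux : connect (restrict A) u x by rewrite restrict_sym (path_connect pA hu).
case/connectP: (connect_trans cux (path_connect pA hv)) => s ps ->.
exists s; split => //; first by apply: sub_path ps => a b /and3P[].
by move=> b; rewrite inE => /predU1P[-> // | /(path_restrict_sub ps)].
Qed.

(* Helly property for three walks in a forest: if they pairwise share a
   vertex, then all three share one (the median of the three meeting
   points, joined by walks inside each of them). *)
Lemma tree_helly x1 p1 x2 p2 x3 p3 :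
  path r x1 p1 -> path r x2 p2 -> path r x3 p3 ->
  (exists2 z, z \in x1 :: p1 & z \in x2 :: p2) ->
  (exists2 z, z \in x2 :: p2 & z \in x3 :: p3) ->
  (exists2 z, z \in x3 :: p3 & z \in x1 :: p1) ->
  exists m, [/\ m \in x1 :: p1, m \in x2 :: p2 & m \in x3 :: p3].
Proof.
move=> q1 q2 q3 [z12 a1 a2] [z23 b2 b3] [z31 c3 c1].
have [s1 [ps1 ls1 ss1]] := walk_within q1 c1 a1.
have [s2 [ps2 ls2 ss2]] := walk_within q2 a2 b2.
have [s3 [ps3 ls3 ss3]] := walk_within q3 c3 b3.
rewrite -ls1 in ps2 ls2 ss2; rewrite -ls3 in ls2.
have [m [m1 m2 m3]] := tree_median ps1 ps3 ps2 ls2.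
by exists m; split; [exact: ss1 | exact: ss2 | exact: ss3].
Qed.

End Trees.

(* Splitting a walk of length <= t at an inner step, one side has at most
   t/2 steps. *)
Lemma half_split a b t : a + b.+1 <= t -> a < t./2 \/ b <= t./2.
Proof. lia. Qed.

Lemma half_add_le t : t./2 + t./2 <= t.
Proof. lia. Qed.

Section Cover.
Variable T : finType.
Variables (e r : rel T) (t : nat).
Hypothesis sym : symmetric r.
Hypothesis edge_within : forall u v, e u v -> within r t u v.

Definition near (I : seq T) (m : T) : Prop := exists2 u, u \in I & within r t./2 u m.

Lemma walk_near_ends x s m : path r x s -> size s <= t -> m \in x :: s ->
  near [:: x; last x s] m.
Proof.
move=> ps hs; rewrite inE => /predU1P[->|ms].
  by exists x; [rewrite mem_head | exists [::]].
case/splitPr: ms ps hs => s1 s2; rewrite cat_path size_cat /= => /and3P[ps1 rm ps2] hs.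
case: (half_split hs) => [h1|h2].
  exists x; first exact: mem_head.
  by exists (rcons s1 m); rewrite size_rcons rcons_path ps1 rm last_rcons.
have [s' [hs' ps' ls']] := rev_walk sym ps2.
exists (last m s2); first by rewrite last_cat /= !inE eqxx orbT.
by exists s'; rewrite hs'.
Qed.

Lemma cover_walk x xs : path e x xs ->
  exists p, [/\ path r x p, {subset x :: xs <= x :: p}
    & forall m, m \in x :: p -> near (x :: xs) m].
Proof.
elim: xs x => [|y ys IH] x /=.
  move=> _; exists [::]; split=> // m; rewrite inE => /eqP->.
  by exists x; [rewrite mem_head | exists [::]].
case/andP=> exy /IH[p [pp sub nearp]].
have [s [hs ps ls]] := edge_within exy.
exists (s ++ p); split.
- by rewrite cat_path ps ls.
- move=> v; rewrite inE => /predU1P[->|/sub]; first exact: mem_head.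
  by rewrite -ls -cat_cons mem_cat inE => /predU1P[->|->]; rewrite ?mem_last ?orbT.
- move=> m; rewrite -cat_cons mem_cat => /orP[ms|mp].
    have [u hu hum] := walk_near_ends ps hs ms.
    by exists u => //; move: hu; rewrite ls !inE => /orP[] ->; rewrite ?orbT.
  have [u hu hum] : near (y :: ys) m by apply: nearp; rewrite inE mp orbT.
  by exists u => //; rewrite inE hu orbT.
Qed.

End Cover.

Definition transversal_within (T : finType) (e : rel T) (I1 I2 I3 : seq T) (n : nat) : Prop :=
  exists u1 u2 u3, [/\ u1 \in I1, u2 \in I2, u3 \in I3
    & maxn (dist e u1 u2) (maxn (dist e u2 u3) (dist e u1 u3)) <= n].

(* The first vertices always form a transversal, since distances are
   bounded by #|T|; this covers the degenerate value of sigma. *)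
Lemma head_transversal (T : finType) (e : rel T) x1 xs1 x2 xs2 x3 xs3 :
  transversal_within e (x1 :: xs1) (x2 :: xs2) (x3 :: xs3) #|T|.
Proof. by exists x1, x2, x3; rewrite !mem_head !geq_max !dist_le_card. Qed.

Lemma meet_of_card1 (T : finType) (A B : seq T) :
  #|[predI A & B]| = 1 -> exists2 z, z \in A & z \in B.
Proof.
move=> h; have /card_gt0P[z] : 0 < #|[predI A & B]| by rewrite h.
by rewrite inE => /andP[zA zB]; exists z.
Qed.

Lemma tree_transversal (T : finType) (e r : rel T) (t : nat) x1 xs1 x2 xs2 x3 xs3 :
  symmetric r -> irreflexive r -> acyclic r -> subrel r e ->
  (forall u v, e u v -> within r t u v) ->
  path e x1 xs1 -> path e x2 xs2 -> path e x3 xs3 ->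
  (exists2 z, z \in x1 :: xs1 & z \in x2 :: xs2) ->
  (exists2 z, z \in x2 :: xs2 & z \in x3 :: xs3) ->
  (exists2 z, z \in x3 :: xs3 & z \in x1 :: xs1) ->
  transversal_within e (x1 :: xs1) (x2 :: xs2) (x3 :: xs3) t.
Proof.
move=> sym irr acy sub edge pe1 pe2 pe3 [z12 a1 a2] [z23 b2 b3] [z31 c3 c1].
have [p1 [pp1 sub1 near1]] := cover_walk sym edge pe1.
have [p2 [pp2 sub2 near2]] := cover_walk sym edge pe2.
have [p3 [pp3 sub3 near3]] := cover_walk sym edge pe3.
have [m [m1 m2 m3]] := tree_helly sym irr acy pp1 pp2 pp3
  (ex_intro2 _ _ z12 (sub1 _ a1) (sub2 _ a2))
  (ex_intro2 _ _ z23 (sub2 _ b2) (sub3 _ b3))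
  (ex_intro2 _ _ z31 (sub3 _ c3) (sub1 _ c1)).
have [u1 hu1 w1] := near1 m m1.
have [u2 hu2 w2] := near2 m m2.
have [u3 hu3 w3] := near3 m m3.
have close u v : within r t./2 u m -> within r t./2 v m -> dist e u v <= t.
  by move=> wu wv; apply: leq_trans (within_dist sym sub wu wv) (half_add_le t).
by exists u1, u2, u3; rewrite hu1 hu2 hu3 !geq_max !close.
Qed.

Lemma stretch_transversal (T : finType) (e : rel T) (S : {set T * T})
    x1 xs1 x2 xs2 x3 xs3 :
  simple_graph e -> spanning_tree e S ->
  path e x1 xs1 -> path e x2 xs2 -> path e x3 xs3 ->
  (exists2 z, z \in x1 :: xs1 & z \in x2 :: xs2) ->
  (exists2 z, z \in x2 :: xs2 & z \in x3 :: xs3) ->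
  (exists2 z, z \in x3 :: xs3 & z \in x1 :: xs1) ->
  transversal_within e (x1 :: xs1) (x2 :: xs2) (x3 :: xs3) (stretch e S).
Proof.
move=> [esym eirr] [Se Ssym _ Sacy]; set t := stretch e S => pe1 pe2 pe3 m12 m23 m31.
have [tT|Tt] := leqP #|T| t.
  have [u1 [u2 [u3 [hu1 hu2 hu3 hd]]]] := head_transversal e x1 xs1 x2 xs2 x3 xs3.
  by exists u1, u2, u3; split=> //; apply: leq_trans tT.
have Srsym : symmetric (srel S) by move=> a b; apply/idP/idP => /Ssym.
have Srirr : irreflexive (srel S) by move=> a; apply/negP => /Se; rewrite eirr.
apply: (tree_transversal Srsym Srirr Sacy) pe1 pe2 pe3 m12 m23 m31 => [a b /Se //|].
move=> u v euv.
have dt : dist (srel S) u v <= t.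
  exact: (@leq_bigmax_cond _ (fun p : T * T => e p.1 p.2) (fun p => dist (srel S) p.1 p.2) (u, v) euv).
have [s [hs ps ls]] := dist_walk (leq_ltn_trans dt Tt).
by exists s; rewrite hs.
Qed.

Lemma supported_le (T : finType) (e : rel T) (R : numDomainType) (k : R) I1 I2 I3 n :
  (forall u1 u2 u3 : T, u1 \in I1 -> u2 \in I2 -> u3 \in I3 ->
    (k <= (maxn (dist e u1 u2) (maxn (dist e u2 u3) (dist e u1 u3)))%:R)%R) ->
  transversal_within e I1 I2 I3 n -> (k <= n%:R)%R.
Proof.
move=> hk [u1 [u2 [u3 [hu1 hu2 hu3 hn]]]].
by apply: le_trans (hk _ _ _ hu1 hu2 hu3) _; rewrite ler_nat.
Qed.

Theorem mainTheorem1 (T : finType) (e : rel T) (R : realFieldType) (k : R) :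
  simple_graph e -> connected_graph e -> (0 <= k)%R ->
  (exists c : seq T, is_cycle e c /\ k_supported e k c) ->
  (k <= (sigma e)%:R)%R.
Proof.
move=> sg _ _ [c [_ [I1 [I2 [I3 [hp _ meets hk]]]]]].
case: meets => /meet_of_card1 m12 /meet_of_card1 m23 /meet_of_card1 m31.
case: I1 hp hk m12 m31 => [|x1 xs1]; first by case/and3P.
case: I2 m23 => [|x2 xs2] m23; first by case/and3P.
case: I3 m23 => [|x3 xs3] m23; first by case/and3P.
case/and3P=> /andP[pe1 _] /andP[pe2 _] /andP[pe3 _] hk m12 m31.
rewrite /sigma; apply: (big_ind (fun n : nat => k <= n%:R)%R).
- exact: supported_le hk (head_transversal e x1 xs1 x2 xs2 x3 xs3).
- by move=> a b ha hb; rewrite /minn; case: ifP.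
- move=> S /asboolP hS; apply: supported_le hk _.
  exact: stretch_transversal sg hS pe1 pe2 pe3 m12 m23 m31.
Qed.
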